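(* Let $A$ be a finite alphabet, $E\subseteq W(A)$ and $\vec s=(s_n(x))_{n=0}^\infty\in V^\infty(A)$ such that $E$ is large in $\vec s$. Then there exist $m\in\mathbb N$ and $w(x)\in\langle (s_n(x))_{n=0}^m\rangle_v$ such that $\{w(a):a\in A\}\subseteq E$.
   Context: $\mathbb N=\{0,1,2,\dots\}$. Let $A$ be a finite nonempty alphabet. $W(A)$ denotes the set of all finite words over $A$, including the empty word; words are concatenated by juxtaposition. Fix a symbol $x\notin A$. A variable word over $A$ is a finite word over $A\cup\{x\}$ in which $x$ occurs at least once; $V(A)$ is the set of variable words. For $s(x)\in V(A)$ and $a\in A\cup\{x\}$, $s(a)$ is obtained by replacing every occurrence of $x$ by $a$. $V^\infty(A)$ is the set of infinite sequences of variable words. For a sequence $(s_n(x))_{n\in I}$ of variable words indexed by a set $I\subseteq\mathbb N$ that is either a finite interval or of the form $\{m,m+1,\dots\}$: the constant span $\langle (s_n(x))_{n\in I}\rangle_c$ is the set of all words $s_{l_0}(a_0)s_{l_1}(a_1)\cdots s_{l_j}(a_j)$ with $j\ge 0$, $l_0<\dots<l_j$ in $I$ and $a_0,\dots,a_j\in A$; the variable span $\langle (s_n(x))_{n\in I}\rangle_v$ is the set of all words $s_{l_0}(a_0)\cdots s_{l_j}(a_j)$ with $j\ge0$, $l_0<\dots<l_j$ in $I$, $a_0,\dots,a_j\in A\cup\{x\}$ and at least one $a_i=x$. Extracted subsequences: let $\vec s=(s_n(x))_{n=0}^\infty\in V^\infty(A)$. A finite sequence $(t_n(x))_{n=0}^l$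 of variable words is an extracted subsequence of $\vec s$ if there exist integers $0=m_0<m_1<\dots<m_{l+1}$ with $t_i(x)\in\langle (s_n(x))_{n=m_i}^{m_{i+1}-1}\rangle_v$ for all $0\le i\le l$. An infinite sequence $\vec t=(t_n(x))_{n=0}^\infty$ is an extracted subsequence of $\vec s$ if every initial segment $(t_n(x))_{n=0}^l$ is a finite extracted subsequence of $\vec s$. We write $\vec t\le\vec s$. A set $E\subseteq W(A)$ is large in $\vec s\in V^\infty(A)$ if $E\cap\langle\vec w\rangle_c\neq\emptyset$ for every infinite extracted subsequence $\vec w$ of $\vec s$. *)

From mathcomp Require Import all_boot.
Set Implicit Arguments. Unset Strict Implicit. Unset Printing Implicit Defensive.

(* Letters of A ∪ {x}: [Some a] is the letter a, [None] is the variable x.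
   Words over A are [seq A]; variable words are [seq (option A)] containing [None]. *)

Definition is_vword (A : eqType) (s : seq (option A)) : bool := None \in s.

Definition csub (A : Type) (s : seq (option A)) (a : A) : seq A :=
  map (fun c => if c is Some b then b else a) s.

Definition vsub (A : Type) (s : seq (option A)) (c : option A) : seq (option A) :=
  map (fun d => if d is Some b then Some b else c) s.

Definition cspan (A : Type) (s : nat -> seq (option A)) (I : nat -> bool)
  (w : seq A) : Prop :=
  exists (l : seq nat) (a : seq A),
    [/\ l != [::], size a = size l, sorted ltn l, all I l &
        w = flatten [seq csub (s p.1) p.2 | p <- zip l a]].

Definition vspan (A : eqType) (s : nat -> seq (option A)) (I : nat -> bool)
  (w : seq (option A)) : Prop :=
  exists (l : seq nat) (a : seq (option A)),
    [/\ l != [::], size a = size l, sorted ltn l, all I l &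
        None \in a] /\
        w = flatten [seq vsub (s p.1) p.2 | p <- zip l a].

Definition extracted_fin (A : eqType) (s : nat -> seq (option A))
  (t : nat -> seq (option A)) (l : nat) : Prop :=
  exists m : nat -> nat,
    [/\ m 0 = 0,
        (forall i, i <= l -> m i < m i.+1) &
        (forall i, i <= l -> vspan s (fun n => (m i <= n) && (n < m i.+1)) (t i))].

Definition extracted (A : eqType) (s t : nat -> seq (option A)) : Prop :=
  forall l, extracted_fin s t l.

Definition large (A : eqType) (E : seq A -> Prop) (s : nat -> seq (option A)) : Prop :=
  forall w, extracted s w -> exists u, E u /\ cspan w (fun _ => true) u.

From mathcomp Require Import all_boot boolp zify.
Set Implicit Arguments. Unset Strict Implicit. Unset Printing Implicit Defensive.

(* The engine is the Hales-Jewett theorem, proved first for the alphabets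
   {0,..,k-1} by induction on k, through the classical "insensitive family"
   argument: r variable words L_1..L_r whose glued points have a colour that
   does not change when one coordinate moves inside {0,..,k-1}; a pigeonhole
   over the r+1 "staircase" points k^i 0^(r-i) then yields a monochromatic
   line over {0,..,k}.

   For the theorem we argue by contradiction.  If no such w exists, we build
   blocks t_0, t_1, ... of s on consecutive intervals so that no constant word
   of the earlier blocks followed by a constant instance of t_n lies in E:
   Hales-Jewett, applied to the colouring recording which of the finitely many
   prefixes followed by the current word land in E, produces each new block,
   and dependent choice produces the whole sequence.  It is an extracted
   subsequence of s whose constant span misses E, so E is not large in s. *)

Definition glue (T : Type) (Ls : seq (seq (option T))) (c : seq T) : seq T :=
  flatten [seq csub p.1 p.2 | p <- zip Ls c].

Definition vglue (T : Type) (Ls : seq (seq (option T))) (d : seq (option T)) :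
  seq (option T) := flatten [seq vsub p.1 p.2 | p <- zip Ls d].

Section WordAlgebra.
Variable T : Type.
Implicit Types (L : seq (option T)) (Ls : seq (seq (option T))).

Lemma csub_cat (x y : seq (option T)) a : csub (x ++ y) a = csub x a ++ csub y a.
Proof. exact: map_cat. Qed.

Lemma csub_vsub L o a : csub (vsub L o) a = csub L (odflt a o).
Proof. by rewrite /csub /vsub -map_comp; apply: eq_map => [[b|]] //=; case: o. Qed.

Lemma vsub_None L : vsub L None = L.
Proof. by rewrite /vsub -[RHS]map_id; apply: eq_map => [[]]. Qed.

Lemma csub_Some (p : seq T) a : csub (map Some p) a = p.
Proof. by rewrite /csub -map_comp map_id. Qed.

Lemma csub_omap (S : Type) (f : S -> T) (L : seq (option S)) j :
  csub (map (omap f) L) (f j) = map f (csub L j).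
Proof. by rewrite /csub -!map_comp; apply: eq_map => [[b|]]. Qed.

Lemma glue_cons L Ls x c : glue (L :: Ls) (x :: c) = csub L x ++ glue Ls c.
Proof. by []. Qed.

Lemma glue_size Ls c : size c = size Ls -> size (glue Ls c) = sumn (map size Ls).
Proof. by elim: Ls c => [|L Ls IH] [|x c] //= [] /IH; rewrite size_cat size_map => ->. Qed.

Lemma vglue_size Ls d : size d = size Ls -> size (vglue Ls d) = sumn (map size Ls).
Proof. by elim: Ls d => [|L Ls IH] [|x d] //= [] /IH; rewrite size_cat size_map => ->. Qed.

Lemma glue_cat Ls1 Ls2 c1 c2 : size c1 = size Ls1 ->
  glue (Ls1 ++ Ls2) (c1 ++ c2) = glue Ls1 c1 ++ glue Ls2 c2.
Proof. by move=> Hsz; rewrite /glue zip_cat // map_cat flatten_cat. Qed.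

Lemma vglue_cat Ls1 Ls2 d1 d2 : size d1 = size Ls1 ->
  vglue (Ls1 ++ Ls2) (d1 ++ d2) = vglue Ls1 d1 ++ vglue Ls2 d2.
Proof. by move=> Hsz; rewrite /vglue zip_cat // map_cat flatten_cat. Qed.

Lemma glue_rcons Ls L c a : size c = size Ls ->
  glue (rcons Ls L) (rcons c a) = glue Ls c ++ csub L a.
Proof. by move=> Hsz; rewrite -!cats1 glue_cat // /glue /= cats0. Qed.

Lemma csub_vglue Ls d a : csub (vglue Ls d) a = glue Ls (map (odflt a) d).
Proof. by elim: Ls d => [|L Ls IH] [|x d] //=; rewrite csub_cat csub_vsub IH. Qed.

Lemma Some_glue Ls c : map Some (glue Ls c) = vglue Ls (map Some c).
Proof.
elim: Ls c => [|L Ls IH] [|x c] //=; rewrite map_cat IH; congr (_ ++ _).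
by rewrite /csub /vsub -map_comp; apply: eq_map => [[]].
Qed.

Lemma cspan_glue (s : nat -> seq (option T)) l c :
  flatten [seq csub (s p.1) p.2 | p <- zip l c] = glue (map s l) c.
Proof. by elim: l c => [|n l IH] [|x c] //=; rewrite IH. Qed.

Lemma vspan_vglue (s : nat -> seq (option T)) l d :
  flatten [seq vsub (s p.1) p.2 | p <- zip l d] = vglue (map s l) d.
Proof. by elim: l d => [|n l IH] [|x d] //=; rewrite IH. Qed.

End WordAlgebra.

Lemma sorted_ltn_cat (l1 l2 : seq nat) b : sorted ltn l1 -> sorted ltn l2 ->
  all (fun n => n < b) l1 -> all (fun n => b <= n) l2 -> sorted ltn (l1 ++ l2).
Proof.
rewrite !(sorted_pairwise ltn_trans) pairwise_cat => -> -> H1 H2; rewrite !andbT.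
by apply/allrelP => m n /(allP H1) Hm /(allP H2); lia.
Qed.

Lemma sorted_ltn_rcons (l : seq nat) x :
  sorted ltn (rcons l x) -> sorted ltn l /\ all (fun n => n < x) l.
Proof. by rewrite !(sorted_pairwise ltn_trans) pairwise_rcons => /andP[]. Qed.

Lemma vspan_mono (A : eqType) (s : nat -> seq (option A)) (I J : nat -> bool) w :
  (forall n, I n -> J n) -> vspan s I w -> vspan s J w.
Proof.
move=> IJ [l [d [[Hl Hsz Hs HI Hd] Hw]]]; exists l, d; split => //; split => //.
by apply/allP => n /(allP HI) /IJ.
Qed.

Lemma dependent_choice (T : Type) (x0 : T) (P : seq T -> Prop) :
  P [::] -> (forall xs, P xs -> exists x, P (rcons xs x)) ->
  exists f : nat -> T, forall n, P (mkseq f n).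
Proof.
move=> P0 Pext.
have [h Hh] : {h & forall xs, P xs -> P (rcons xs (h xs))}.
  apply: (@choice _ _ (fun xs x => P xs -> P (rcons xs x))) => xs.
  by case: (EM (P xs)) => [/Pext [x Hx] | HnP]; [exists x | exists x0].
pose xs n := iter n (fun ys => rcons ys (h ys)) [::].
exists (fun n => h (xs n)) => n.
have -> : mkseq (fun n => h (xs n)) n = xs n.
  by elim: n => [|n IH] //; rewrite mkseqS IH.
by elim: n => [|n IH] //=; apply: Hh.
Qed.

Definition letter_lt (k : nat) (o : option nat) : bool :=
  if o is Some j then j < k else true.

Definition vword_over (k : nat) (L : seq (option nat)) : bool :=
  (None \in L) && all (letter_lt k) L.

Definition hales_jewett (k : nat) : Prop := forall C : finType, exists N,
  forall chi : seq nat -> C, exists L, [/\ size L = N, vword_over k L &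
    forall a b, a < k -> b < k -> chi (csub L a) = chi (csub L b)].

Definition insensitive (C : Type) (k : nat) (chi : seq nat -> C)
  (Ls : seq (seq (option nat))) : Prop :=
  forall i c a, i < size Ls -> size c = size Ls -> all (fun x => x < k.+1) c ->
    a < k -> chi (glue Ls (set_nth 0 c i a)) = chi (glue Ls (set_nth 0 c i 0)).

Definition insensitive_family (k r : nat) : Prop := forall C : finType, exists M,
  forall chi : seq nat -> C, exists Ls, [/\ size Ls = r, all (vword_over k) Ls,
    sumn (map size Ls) = M & insensitive k chi Ls].

Lemma glue_letters k Ls c : all (vword_over k) Ls -> all (fun x => x < k.+1) c ->
  all (fun x => x < k.+1) (glue Ls c).
Proof.
elim: Ls c => [|L Ls IH] [|x c] //= /andP[/andP[_ HL] HLs] /andP[Hx Hc].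
rewrite all_cat IH // andbT /csub all_map.
by apply/allP => o /(allP HL); case: o => //= j; lia.
Qed.

Lemma insensitive_eq k Ls (C : Type) (chi : seq nat -> C) c d :
  insensitive k chi Ls -> size c = size Ls -> size d = size Ls ->
  all (fun x => x < k.+1) c -> all (fun x => x < k.+1) d ->
  (forall m, nth 0 c m = nth 0 d m \/ (nth 0 c m < k /\ nth 0 d m < k)) ->
  chi (glue Ls c) = chi (glue Ls d).
Proof.
elim: Ls C chi c d => [|L Ls IH] C chi [|c0 c] [|d0 d] //= Hins [Hc] [Hd]
  /andP[Hc0 Hca] /andP[Hd0 Hda] Hm.
have Htail : chi (csub L c0 ++ glue Ls c) = chi (csub L c0 ++ glue Ls d).
  apply: (IH _ (fun w => chi (csub L c0 ++ w))) => //; last by move=> m; exact: Hm m.+1.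
  move=> i c' a Hi Hc' Hca' Ha.
  by have := Hins i.+1 (c0 :: c') a; rewrite /= Hc' Hc0 Hca'; apply.
have Hhead a : a < k -> chi (csub L a ++ glue Ls d) = chi (csub L 0 ++ glue Ls d).
  by move=> Ha; have := Hins 0 (c0 :: d) a; rewrite /= Hd Hc0 Hda; apply.
rewrite !glue_cons Htail.
by case: (Hm 0) => /= [-> // | [H1 H2]]; rewrite Hhead // Hhead.
Qed.

Lemma insensitive_family0 k : insensitive_family k 0.
Proof. by move=> C; exists 0 => chi; exists [::]. Qed.

(* One more word: colour the first word by the colourings of the remaining
   ones (Hales-Jewett), and the remaining ones by the first letter. *)
Lemma insensitive_familyS k r :
  hales_jewett k -> insensitive_family k r -> insensitive_family k r.+1.
Proof.
move=> HJk Hfam C.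
have [M HM] := Hfam ({ffun 'I_k.+1 -> C} : finType).
have [N HN] := HJk ({ffun M.-tuple 'I_k.+1 -> C} : finType).
exists (N + M) => chi.
have [L [sL okL HL]] :=
  HN (fun v => [ffun y : M.-tuple 'I_k.+1 => chi (v ++ map val y)]).
have [Ls [sLs okLs sumLs HLs]] :=
  HM (fun y => [ffun a : 'I_k.+1 => chi (csub L a ++ y)]).
exists (L :: Ls); split => /=; [by rewrite sLs | by rewrite okL okLs
  | by rewrite sL sumLs |].
move=> [|i] [|c0 c] a //= Hi [Hc] /andP[Hc0 Hca] Ha; rewrite !glue_cons.
- set g := glue Ls c.
  have Hgl : all (fun x => x < k.+1) g by apply: glue_letters.
  have Hy : size (map (@inord k) g) == M by rewrite size_map glue_size // sumLs.
  have Hyv : map val (Tuple Hy) = g.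
    rewrite /= -map_comp -[RHS]map_id; apply/eq_in_map => x Hx /=.
    by rewrite inordK //; apply: (allP Hgl).
  have := congr1 (fun f : {ffun M.-tuple 'I_k.+1 -> C} => f (Tuple Hy))
    (HL a 0 Ha (leq_ltn_trans (leq0n a) Ha)).
  by rewrite !ffunE Hyv.
- have := congr1 (fun f : {ffun 'I_k.+1 -> C} => f (inord c0))
    (HLs i c a Hi Hc Hca Ha).
  by rewrite !ffunE inordK.
Qed.

Lemma insensitive_family_all k r : hales_jewett k -> insensitive_family k r.
Proof.
move=> HJk; elim: r => [|r IH]; first exact: insensitive_family0.
exact: insensitive_familyS.
Qed.

Lemma pigeonhole (C : finType) (f : nat -> C) :
  exists i j, [/\ i < j, j <= #|C| & f i = f j].
Proof.
have : ~~ injectiveb (fun i : 'I_#|C|.+1 => f i).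
  by apply/negP => /injectiveP /leq_card; rewrite card_ord ltnn.
case/injectivePn => i [j Hij Hf]; case: (ltngtP i j) => H.
- by exists i, j; split => //; rewrite -ltnS.
- by exists j, i; split => //; rewrite -ltnS.
- by move: Hij; rewrite (val_inj H) eqxx.
Qed.

Definition point (k r n : nat) : seq nat := mkseq (fun m => if m < n then k else 0) r.

Definition line (k r i j : nat) : seq (option nat) :=
  mkseq (fun m => if m < i then Some k else if m < j then None else Some 0) r.

Lemma odflt_line k r i j a : map (odflt a) (line k r i j) =
  mkseq (fun m => if m < i then k else if m < j then a else 0) r.
Proof.
by rewrite /line /mkseq -map_comp; apply: eq_map => m /=; case: ifP => //; case: ifP.
Qed.

Lemma vglue_letters k Ls d : all (vword_over k) Ls -> all (letter_lt k.+1) d ->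
  all (letter_lt k.+1) (vglue Ls d).
Proof.
elim: Ls d => [|L Ls IH] [|o d] //= /andP[/andP[_ HL] HLs] /andP[Ho Hd].
rewrite all_cat IH // andbT /vsub all_map.
by apply/allP => o' /(allP HL); case: o' => [j|] /=; [lia | case: o Ho].
Qed.

(* For i < j the glued line is a variable word over {0,..,k}: the word L_i
   keeps its variable. *)
Lemma line_vword k r i j Ls : i < j -> j <= r -> size Ls = r ->
  all (vword_over k) Ls -> vword_over k.+1 (vglue Ls (line k r i j)).
Proof.
move=> Hij Hjr sLs okLs; have Hi : i < r by lia.
have Hline_i : nth None (line k r i j) i = None by rewrite nth_mkseq // ltnn Hij.
apply/andP; split; last first.
  apply: vglue_letters => //; rewrite /line /mkseq all_map.
  apply/allP => m _ /=; case: (m < i) => /=; [exact: ltnSn | by case: (m < j)].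
apply/flatten_mapP; exists (nth [::] Ls i, nth None (line k r i j) i).
  by rewrite -nth_zip ?size_mkseq // mem_nth // size_zip size_mkseq sLs minnn.
rewrite /= Hline_i vsub_None.
have : nth [::] Ls i \in Ls by apply: mem_nth; rewrite sLs.
by move/(allP okLs) => /andP[].
Qed.

Lemma line_colour k r i j Ls (C : Type) (chi : seq nat -> C) a :
  insensitive k chi Ls -> size Ls = r -> i < j -> a < k.+1 ->
  chi (csub (vglue Ls (line k r i j)) a) =
  chi (glue Ls (point k r (if a < k then i else j))).
Proof.
move=> Hins sLs Hij Ha; rewrite csub_vglue odflt_line.
case: ifP => Hak; last first.
  have -> : a = k by lia.
  congr (chi (glue Ls _)); apply: eq_mkseq => m.
  by case: ltnP => ?; case: ltnP => ? //; lia.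
apply: (insensitive_eq Hins); rewrite ?size_mkseq //.
- by rewrite /mkseq all_map; apply/allP => m _ /=; case: ifP => //; case: ifP.
- by rewrite /point /mkseq all_map; apply/allP => m _ /=; case: ifP.
move=> m; case: (ltnP m r) => Hm; last by rewrite !nth_default ?size_mkseq //; left.
rewrite !nth_mkseq //; case: (m < i); first by left.
by case: (m < j); [right; lia | left].
Qed.

(* With r = #|C| insensitive words, two staircase points k^i 0^(r-i) and
   k^j 0^(r-j), i < j, have the same colour; the line through them is
   monochromatic. *)
Lemma hales_jewettS k : hales_jewett k -> hales_jewett k.+1.
Proof.
move=> HJk C; have [M HM] := insensitive_family_all #|C| HJk C.
exists M => chi; have [Ls [sLs okLs sumLs Hins]] := HM chi.
have [i [j [Hij Hjr Hcol]]] := pigeonhole (fun n => chi (glue Ls (point k #|C| n))).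
exists (vglue Ls (line k #|C| i j)); split.
- by rewrite vglue_size // size_mkseq.
- exact: line_vword.
have Hall a : a < k.+1 ->
    chi (csub (vglue Ls (line k #|C| i j)) a) = chi (glue Ls (point k #|C| j)).
  by move=> Ha; rewrite (line_colour Hins) //; case: ifP.
by move=> a b Ha Hb; rewrite !Hall.
Qed.

(* Over the empty alphabet any variable word will do. *)
Lemma hales_jewett_all k : hales_jewett k.
Proof.
elim: k => [|k IH]; last exact: hales_jewettS.
by move=> C; exists 1 => chi; exists [:: None].
Qed.

(* Hales-Jewett over an arbitrary finite alphabet, by renaming the letters
   {0,..,#|A|-1} to the elements of A. *)
Lemma hales_jewett_fin (A C : finType) (chi : seq A -> C) :
  exists L : seq (option A), None \in L /\ forall a b, chi (csub L a) = chi (csub L b).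
Proof.
case: (pickP (@predT A)) => [a0 _|noA]; last first.
  by exists [:: None]; split => // a; have := noA a.
pose en j := nth a0 (enum A) j.
have en_index a : en (index a (enum A)) = a by rewrite /en nth_index ?mem_enum.
have index_lt a : index a (enum A) < #|A| by rewrite cardE index_mem mem_enum.
have [N HN] := hales_jewett_all #|A| C.
have [L [_ /andP[HL _] Hcol]] := HN (fun v => chi (map en v)).
exists (map (omap en) L); split; first by apply/mapP; exists None.
move=> a b; rewrite -(en_index a) -(en_index b) !csub_omap.
by apply: Hcol; apply: index_lt.
Qed.

Section LargeSets.
Variables (A : finType) (E : seq A -> Prop) (s : nat -> seq (option A)).

Fixpoint cwords (t : nat -> seq (option A)) (n : nat) : seq (seq A) :=
  if n is n'.+1 then
    cwords t n' ++ [seq p ++ csub (t n') a | p <- cwords t n', a <- enum A]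
  else [:: [::]].

Lemma cwords_sub t m n : m <= n -> {subset cwords t m <= cwords t n}.
Proof.
elim: n => [|n IH]; first by rewrite leqn0 => /eqP ->.
by rewrite leq_eqVlt => /orP[/eqP -> // | /IH Hm p /Hm]; rewrite /= mem_cat => ->.
Qed.

Lemma cwords_local t t' n :
  (forall i, i < n -> t i = t' i) -> cwords t n = cwords t' n.
Proof.
elim: n => [|n IH] Ht //=; rewrite IH ?Ht // => i Hi; apply: Ht; lia.
Qed.

Lemma cwords_complete t l c n : sorted ltn l -> all (fun x => x < n) l ->
  size c = size l -> glue (map t l) c \in cwords t n.
Proof.
elim/last_ind: l c n => [|l x IH] c n Hs Hall Hsz.
  by case: c Hsz => // _; apply: (cwords_sub (leq0n n)); rewrite inE.
case/lastP: c Hsz => [|c a]; first by rewrite size_rcons.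
rewrite !size_rcons => -[Hsz]; have [Hs' Hl] := sorted_ltn_rcons Hs.
move: Hall; rewrite all_rcons => /andP[Hxn _].
rewrite map_rcons glue_rcons ?size_map //; apply: (cwords_sub Hxn).
rewrite /= mem_cat; apply/orP; right.
by apply: allpairs_f; [exact: IH | rewrite mem_enum].
Qed.

Definition cword_below (b : nat) (p : seq A) : Prop :=
  exists l c, [/\ sorted ltn l, all (fun n => n < b) l, size c = size l &
    p = glue (map s l) c].

Lemma cword_below_mono b b' p : b <= b' -> cword_below b p -> cword_below b' p.
Proof.
move=> Hb [l [c [Hs Hl Hsz ->]]]; exists l, c; split => //.
by apply/allP => n /(allP Hl); lia.
Qed.

Lemma vspan_interval b e y : vspan s (fun n => (b <= n) && (n < e)) y -> b < e.
Proof.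
move=> [[|n l] [d [[Hne _ _ Hl _] _]]] //.
by move: Hl => /= /andP[/andP[Hb He] _]; apply: leq_ltn_trans He.
Qed.

Lemma cword_below_cat b e p y a : cword_below b p ->
  vspan s (fun n => (b <= n) && (n < e)) y -> cword_below e (p ++ csub y a).
Proof.
move=> [l1 [c1 [Hs1 Hl1 Hsz1 ->]]] Hy; have Hbe := vspan_interval Hy.
move: Hy => [l2 [d2 [[_ Hsz2 Hs2 Hl2 _] ->]]].
exists (l1 ++ l2), (c1 ++ map (odflt a) d2); split.
- by apply: sorted_ltn_cat Hs1 Hs2 Hl1 _; apply/allP => n /(allP Hl2) /andP[].
- by rewrite all_cat; apply/andP; split; apply/allP => n;
    [move/(allP Hl1) | move/(allP Hl2)]; lia.
- by rewrite !size_cat size_map Hsz1 Hsz2.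
- by rewrite map_cat glue_cat ?size_map // vspan_vglue csub_vglue.
Qed.

Lemma vspan_cat b e p y : cword_below b p ->
  vspan s (fun n => (b <= n) && (n < e)) y ->
  vspan s (fun n => n < e) (map Some p ++ y).
Proof.
move=> [l1 [c1 [Hs1 Hl1 Hsz1 ->]]] Hy; have Hbe := vspan_interval Hy.
move: Hy => [l2 [d2 [[Hne Hsz2 Hs2 Hl2 Hd2] ->]]].
exists (l1 ++ l2), (map Some c1 ++ d2); split; first split.
- by case: (l1) Hne.
- by rewrite !size_cat size_map Hsz1 Hsz2.
- by apply: sorted_ltn_cat Hs1 Hs2 Hl1 _; apply/allP => n /(allP Hl2) /andP[].
- by rewrite all_cat; apply/andP; split; apply/allP => n;
    [move/(allP Hl1) | move/(allP Hl2)]; lia.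
- by rewrite mem_cat Hd2 orbT.
- by rewrite !vspan_vglue map_cat vglue_cat ?size_map // Some_glue.
Qed.

Definition fresh_block (b : nat) (P : seq (seq A)) (x : nat * seq (option A)) :
  Prop :=
  [/\ b < x.1, vspan s (fun n => (b <= n) && (n < x.1)) x.2 &
      forall p, p \in P -> forall a, ~ E (p ++ csub x.2 a)].

Hypothesis no_witness :
  ~ exists m w, vspan s (fun n => n <= m) w /\ forall a, E (csub w a).

(* The key step: colour each candidate word by the set of prefixes it
   completes into E; a monochromatic line is a fresh block, since otherwise
   some prefix followed by the line would be a witness. *)
Lemma next_block b P : (forall p, p \in P -> cword_below b p) ->
  exists x, fresh_block b P x.
Proof.
move=> HP.
pose word (v : seq A) := glue (map s (iota b (size v))) v.
have [L [HL Hcol]] := hales_jewett_fin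
  (fun v => [ffun j : 'I_(size P) => `[< E (nth [::] P j ++ word v) >]]).
pose y := vglue (map s (iota b (size L))) L.
have HLpos : 0 < size L by case: (L) HL.
have Hy : vspan s (fun n => (b <= n) && (n < b + size L)) y.
  exists (iota b (size L)), L; split; last by rewrite vspan_vglue.
  split; [by case: (L) HL | by rewrite size_iota | exact: iota_ltn_sorted
    | by apply/allP => n; rewrite mem_iota | by []].
have csub_y a : csub y a = word (csub L a) by rewrite csub_vglue /word size_map.
exists (b + size L, y); split => //=; first lia.
move=> p Hp a Ea.
have Eall a' : E (p ++ csub y a').
  have Hidx : index p P < size P by rewrite index_mem.
  have := congr1 (fun f : {ffun 'I_(size P) -> bool} => f (Ordinal Hidx)) (Hcol a a').
  rewrite !ffunE /= nth_index // -!csub_y => Heq.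
  by apply/asboolP; rewrite -Heq; apply/asboolP.
apply: no_witness; exists (b + size L).-1, (map Some p ++ y); split.
  by apply: vspan_mono (vspan_cat (HP p Hp) Hy) => n /=; lia.
by move=> a'; rewrite csub_cat csub_Some.
Qed.

(* A sequence of blocks is described by g : nat -> nat * seq (option A),
   where (g i).1 is the right end of block i and (g i).2 the block itself. *)
Definition boundary (g : nat -> nat * seq (option A)) (i : nat) : nat :=
  if i is j.+1 then (g j).1 else 0.

Definition good_block (g : nat -> nat * seq (option A)) (i : nat) : Prop :=
  fresh_block (boundary g i) (cwords (fun j => (g j).2) i) (g i).

Lemma good_block_local g g' i : (forall j, j < i -> g' j = g j) ->
  good_block g' i = fresh_block (boundary g i) (cwords (fun j => (g j).2) i) (g' i).
Proof.
move=> Hg; rewrite /good_block (cwords_local (t' := fun j => (g j).2)) => [|j /Hg -> //].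
by case: i Hg => [|i] // Hg; rewrite /boundary Hg.
Qed.

Lemma cwords_below g n : (forall i, i < n -> good_block g i) ->
  forall p, p \in cwords (fun j => (g j).2) n -> cword_below (boundary g n) p.
Proof.
elim: n => [|n IH] Hgood p /=.
  by rewrite inE => /eqP ->; exists [::], [::].
have IH' := IH (fun i Hi => Hgood i (ltnW Hi)).
have [Hlt Hspan _] := Hgood n (ltnSn n).
rewrite mem_cat => /orP[/IH' Hp | /allpairsP[[p' a] [/= /IH' Hp' _ ->]]].
- exact: cword_below_mono (ltnW Hlt) Hp.
- exact: cword_below_cat Hp' Hspan.
Qed.

Definition good_prefix (xs : seq (nat * seq (option A))) : Prop :=
  forall i, i < size xs -> good_block (nth (0, [::]) xs) i.

Lemma good_prefix_rcons xs : good_prefix xs -> exists x, good_prefix (rcons xs x).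
Proof.
move=> Hxs; set g := nth (0, [::]) xs.
have [x Hx] := next_block (cwords_below Hxs).
have Hpre j : j < size xs -> nth (0, [::]) (rcons xs x) j = g j.
  by move=> Hj; rewrite nth_rcons Hj.
exists x => i; rewrite size_rcons ltnS leq_eqVlt => /orP[/eqP -> | Hi].
- by rewrite (good_block_local (g := g)) // nth_rcons ltnn eqxx.
- rewrite (good_block_local (g := g)) => [|j Hj]; last by apply: Hpre; lia.
  by rewrite Hpre //; apply: Hxs.
Qed.

Lemma good_sequence : exists g, forall i, good_block g i.
Proof.
have empty_good : good_prefix [::] by [].
have [g Hg] := dependent_choice (0, [::]) empty_good good_prefix_rcons.
exists g => i; have := Hg i.+1 i; rewrite size_mkseq ltnSn => /(_ isT).
rewrite (good_block_local (g := g)) => [|j Hj]; last by rewrite nth_mkseq // ltnW.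
by rewrite nth_mkseq.
Qed.

Lemma not_large : ~ large E s.
Proof.
move=> Hlarge; have [g Hg] := good_sequence.
pose t j := (g j).2.
have Hext : extracted s t.
  by move=> l; exists (boundary g); split => // i _; have [] := Hg i.
have [u [Eu [l [c [Hne Hsz Hs _ Hu]]]]] := Hlarge t Hext.
move: Eu; rewrite Hu cspan_glue.
case/lastP: l Hne Hsz Hs {Hu} => [|l x] // _.
case/lastP: c => [|c a]; rewrite !size_rcons // => -[Hsz] /sorted_ltn_rcons [Hs Hl].
rewrite map_rcons glue_rcons ?size_map //.
have [_ _ Hnot] := Hg x; apply: Hnot.
exact: cwords_complete.
Qed.

End LargeSets.

Theorem fact2p7 (A : finType) (hA : 0 < #|A|) (E : seq A -> Prop)
  (s : nat -> seq (option A)) (hs : forall n, is_vword (s n)) :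
  large E s ->
  exists (m : nat) (w : seq (option A)),
    vspan s (fun n => n <= m) w /\ (forall a : A, E (csub w a)).
Proof.
move=> Hlarge; case: (EM (exists m w, vspan s (fun n => n <= m) w /\
  forall a : A, E (csub w a))) => // Hno.
by case: (not_large Hno Hlarge).
Qed.
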